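(* Let $q\ge3$ be a prime power, $n\ge1$, and let $C\subseteq\mathbb{F}_q^n$ be a linear code of dimension $t$. Then $C\in\mathcal{A}^H_q(n)$ if and only if $C=C_q(n,S)$ for some $S\subseteq\{1,\dots,n\}$ with $|S|=t$.
   Context: For $v\in\mathbb{F}_q^n$, $\mathrm{wt}(v):=|\{i:v_i\ne0\}|$ and $\mathrm{maxwt}(C):=\max\{\mathrm{wt}(c):c\in C\}$. $\mathcal{A}^H_q(n)$ is the set of linear codes $C\subseteq\mathbb{F}_q^n$ with $\dim_{\mathbb{F}_q}(C)=\mathrm{maxwt}(C)$. For $S\subseteq\{1,\dots,n\}$, the free code is $C_q(n,S):=\{v\in\mathbb{F}_q^n: v_i=0\ \text{for all } i\notin S\}$. *)

From HB Require Import structures.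
From mathcomp Require Import all_boot all_order all_algebra all_field.
Set Implicit Arguments. Unset Strict Implicit. Unset Printing Implicit Defensive.
Import GRing.Theory.
Local Open Scope ring_scope.

Definition wt (F : finFieldType) (n : nat) (v : 'rV[F]_n) : nat :=
  #|[set i : 'I_n | v 0 i != 0]|.

Definition maxwt (F : finFieldType) (n : nat) (C : {vspace 'rV[F]_n}) : nat :=
  \max_(v : 'rV[F]_n | v \in C) wt v.

Definition in_AH (F : finFieldType) (n : nat) (C : {vspace 'rV[F]_n}) : Prop :=
  \dim C = maxwt C.

Definition free_code (F : finFieldType) (n : nat) (S : {set 'I_n}) : pred 'rV[F]_n :=
  [pred v : 'rV[F]_n | [forall i : 'I_n, (i \notin S) ==> (v 0 i == 0)]].

(* Let c be a codeword of maximal weight w = dim C and S its support.  A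
   nonzero x in C vanishing on S would give a codeword c + x of weight > w, so
   restriction to S is injective on C; comparing cardinalities, it maps C onto
   F^S, and C contains for each i in S a codeword e_i equal to the i-th unit
   vector on S.  If some codeword d had d_j <> 0 for j outside S, then d, being
   determined by its restriction, is a combination of the e_i, so some e_i has
   a nonzero j-th entry; as q >= 3 there is l <> 0 with c_i + l <> 0, and
   c + l e_i has support containing S and j, again contradicting maximality.
   Hence C lies in the free code C(n, S), which has the same dimension. *)

From HB Require Import structures.
From mathcomp Require Import all_boot all_order all_algebra all_field.
Set Implicit Arguments. Unset Strict Implicit. Unset Printing Implicit Defensive.
Import GRing.Theory.
Local Open Scope ring_scope.

Section FreeCode.
Variables (F : finFieldType) (n : nat).
Implicit Types (S : {set 'I_n}) (v : 'rV[F]_n).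

Definition supp v : {set 'I_n} := [set i | v 0 i != 0].

Definition restr S v : 'rV[F]_n := \row_k (if k \in S then v 0 k else 0).

Lemma free_codeP S v :
  reflect (forall i, i \notin S -> v 0 i = 0) (v \in free_code S).
Proof.
apply: (iffP forallP) => [vS i iS | vS i]; last by apply/implyP => /vS ->.
by apply/eqP; apply: (implyP (vS i)).
Qed.

Lemma restr_free_code S v : restr S v \in free_code S.
Proof. by apply/free_codeP => i iS; rewrite mxE (negbTE iS). Qed.

Lemma restr_id S v : v \in free_code S -> restr S v = v.
Proof.
by move/free_codeP=> vS; apply/rowP => k; rewrite mxE; case: ifPn => // /vS ->.
Qed.

Lemma restrB S u v : restr S (u - v) = restr S u - restr S v.
Proof. by apply/rowP => k; rewrite !mxE; case: ifP; rewrite ?subr0. Qed.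

Lemma card_free_code S : #|@free_code F n S| = (#|F| ^ #|S|)%N.
Proof.
have card_predT : #|(predT : {pred F})| = #|F| by apply: eq_card.
rewrite -card_predT -(card_pffun_on 0 S).
pose f v := [ffun k => v 0 k].
have f_inj : injective f.
  by move=> u v /ffunP uv; apply/rowP => k; have := uv k; rewrite !ffunE.
rewrite -(card_imset (@free_code F n S) f_inj); apply: eq_card => g.
apply/imsetP/pffun_onP => [[v /free_codeP vS ->] | [suppg _]].
  split=> // ; apply/subsetP => k; rewrite !inE ffunE.
  by apply: contraR => /vS ->; rewrite eqxx.
exists (\row_k g k); last by apply/ffunP => k; rewrite !ffunE mxE.
apply/free_codeP => k kS; rewrite mxE; apply: contraNeq kS => gk.
by apply: (subsetP suppg); rewrite inE.
Qed.

Lemma maxwt_free_code (C : {vspace 'rV[F]_n}) S :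
  C =i free_code S -> maxwt C = #|S|.
Proof.
move=> CS; apply/eqP; rewrite eqn_leq; apply/andP; split.
  apply/bigmax_leqP => v; rewrite CS => /free_codeP vS.
  apply/subset_leq_card/subsetP => i; rewrite inE.
  by apply: contraR => /vS ->; rewrite eqxx.
pose w := \row_k (k \in S)%:R : 'rV[F]_n.
have wC : w \in C by rewrite CS; apply/free_codeP => k kS; rewrite mxE (negbTE kS).
apply: leq_trans (bigmax_sup w wC (leqnn _)).
by apply/subset_leq_card/subsetP => i iS; rewrite inE mxE iS oner_eq0.
Qed.

End FreeCode.

Lemma exists_nonzero_neq (F : finFieldType) (a : F) :
  (3 <= #|F|)%N -> exists2 l : F, l != 0 & l != a.
Proof.
move=> F3; have : ~~ (predT \subset [:: 0; a]).
  apply: contraL F3 => /subset_leq_card le_F; rewrite -ltnNge ltnS.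
  have card_predT : #|(predT : {pred F})| = #|F| by apply: eq_card.
  by rewrite -card_predT (leq_trans le_F (card_size _)).
by case/subsetPn => l _; rewrite !inE negb_or => /andP[]; exists l.
Qed.

Section MaximalWeightCodeword.
Variables (F : finFieldType) (n : nat) (C : {vspace 'rV[F]_n}) (c : 'rV[F]_n).
Hypotheses (cC : c \in C) (c_max : forall v, v \in C -> (wt v <= wt c)%N).
Local Notation S := (supp c).

Lemma maxwt_supp_ext v j : v \in C -> S \subset supp v -> j \notin S -> v 0 j = 0.
Proof.
move=> vC Sv jS; apply/eqP; apply: contraTT (c_max vC) => vj; rewrite -ltnNge.
have jSv : j |: S \subset supp v by rewrite subUset sub1set inE vj Sv.
by apply: leq_trans (subset_leq_card jSv); rewrite cardsU1 jS.
Qed.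

Lemma restr_supp_inj : {in C &, injective (restr S)}.
Proof.
have ker0 x : x \in C -> restr S x = 0 -> x = 0.
  move=> xC /rowP xS; have xSi i : i \in S -> x 0 i = 0.
    by move=> iS; have := xS i; rewrite !mxE iS.
  apply/rowP => j; rewrite mxE; have [/xSi // | jS] := boolP (j \in S).
  have cj : c 0 j = 0 by apply/eqP; rewrite inE negbK in jS.
  suff: (c + x) 0 j = 0 by rewrite mxE cj add0r.
  apply: maxwt_supp_ext jS; first by rewrite rpredD.
  by apply/subsetP => i iS; rewrite inE mxE xSi // addr0; rewrite inE in iS.
move=> x y xC yC xy; apply/eqP; rewrite -subr_eq0; apply/eqP/ker0.
  by rewrite rpredB.
by rewrite restrB xy subrr.
Qed.

Hypothesis dimC : \dim C = #|S|.

Lemma restr_supp_onto : [set restr S x | x in C] =i @free_code F n S.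
Proof.
apply/subset_cardP.
  by rewrite card_in_imset ?card_vspace ?card_free_code ?dimC //; apply: restr_supp_inj.
by apply/subsetP => _ /imsetP[x _ ->]; apply: restr_free_code.
Qed.

Hypothesis F3 : (3 <= #|F|)%N.

Lemma mem_free_code_supp d : d \in C -> d \in @free_code F n S.
Proof.
move=> dC; apply/free_codeP => j jS; apply/eqP/negPn/negP => dj.
have cj : c 0 j = 0 by apply/eqP; rewrite inE negbK in jS.
have unit_preim i : exists e, (i \in S) ==> (e \in C) && (restr S e == delta_mx 0 i).
  have [iS | _] := boolP (i \in S); last by exists 0.
  have : delta_mx 0 i \in [set restr S x | x in C].
    rewrite restr_supp_onto; apply/free_codeP => k kS; rewrite mxE eqxx /=.
    by case: eqP kS => [-> | //]; rewrite iS.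
  by case/imsetP => e eC ->; exists e; rewrite eC eqxx.
have [e eP] := fin_all_exists unit_preim.
have eC i : i \in S -> e i \in C by move=> /(implyP (eP i)) /andP[].
have eS i k : i \in S -> k \in S -> e i 0 k = (k == i)%:R.
  move=> iS kS; have /andP[_ /eqP/rowP/(_ k)] := implyP (eP i) iS.
  by rewrite !mxE kS eqxx.
have [i iS eij] : exists2 i, i \in S & e i 0 j != 0.
  apply/exists_inP; apply: contraT => /exists_inPn e0.
  pose d' := \sum_(i in S) d 0 i *: e i.
  have d'C : d' \in C by apply: rpred_sum => i iS; rewrite rpredZ ?eC.
  have d'd : d' = d.
    apply: restr_supp_inj => //; apply/rowP => k; rewrite !mxE; case: ifP => // kS.
    rewrite summxE (bigD1 k) //= big1 => [|i /andP[iS ik]]; rewrite mxE eS //.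
      by rewrite eqxx mulr1 addr0.
    by rewrite eq_sym (negbTE ik) mulr0.
  move: dj; rewrite -d'd summxE big1 ?eqxx // => i iS.
  by rewrite mxE (eqP (negbNE (e0 i iS))) mulr0.
have [l l0 lc] := exists_nonzero_neq (- c 0 i) F3.
suff: (c + l *: e i) 0 j = 0.
  by rewrite !mxE cj add0r => /eqP; rewrite mulf_eq0 (negbTE l0) (negbTE eij).
apply: maxwt_supp_ext jS; first by rewrite rpredD ?rpredZ ?eC.
apply/subsetP => k kS; rewrite inE !mxE eS //.
have [-> | ki] := eqVneq k i; first by rewrite mulr1 addrC addr_eq0.
by rewrite mulr0 addr0; rewrite inE in kS.
Qed.

Lemma maxwt_code_free : C =i @free_code F n S.
Proof.
move=> v; apply/idP/idP => [/mem_free_code_supp // |].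
rewrite -restr_supp_onto => /imsetP[x xC ->].
by rewrite restr_id // mem_free_code_supp.
Qed.

End MaximalWeightCodeword.

Lemma AH_free_code (F : finFieldType) (n : nat) (C : {vspace 'rV[F]_n}) :
  (3 <= #|F|)%N -> in_AH C ->
  exists S : {set 'I_n}, #|S| = \dim C /\ C =i @free_code F n S.
Proof.
move=> F3 dimC.
have C0 : (0 < #|[pred v : 'rV[F]_n | v \in C]|)%N.
  by apply/card_gt0P; exists 0; rewrite inE rpred0.
have [c cC maxc] := eq_bigmax_cond (fun v : 'rV[F]_n => wt v) C0.
have c_max v : v \in C -> (wt v <= wt c)%N.
  by move=> vC; rewrite -maxc; apply: bigmax_sup vC _.
have dimS : \dim C = #|supp c| by rewrite dimC /maxwt maxc.
by exists (supp c); split; last apply: maxwt_code_free.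
Qed.

Theorem proposition2p6 (F : finFieldType) (n t : nat)
    (C : {vspace 'rV[F]_n}) :
  (3 <= #|F|)%N -> (1 <= n)%N -> \dim C = t ->
  (in_AH C <-> exists S : {set 'I_n}, #|S| = t /\ C =i @free_code F n S).
Proof.
move=> F3 _ <-; split; first exact: AH_free_code.
by case=> S [SC CS]; rewrite /in_AH (maxwt_free_code CS) SC.
Qed.
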